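(* Let $S=\{0,s_1,\dots,s_n,1,\infty\}$ with cyclic order $0<s_1<\dots<s_n<1<\infty<0$, and for $i\in\{1,\dots,n\}$ let $\pi_i:\overline{\mathcal M}_{0,S}\to\overline{\mathcal M}_{0,\{0,s_i,1,\infty\}}=\mathbb{P}^1$ be the contraction morphism forgetting all marked points except $0,s_i,1,\infty$. Then the image under $\pi_i$ of every vertex of $B_n$ lies in $\{0,1\}$.
   Context: $\overline{\mathcal M}_{0,T}$ is the moduli space of $T$-pointed stable genus-$0$ curves; boundary divisors $D(\sigma)$ correspond to unordered stable $2$-partitions of $T$. $\overline{\mathcal M}_{0,\{0,s_i,1,\infty\}}$ is identified with $\mathbb{P}^1$ via the position of $s_i$ when the points $0,1,\infty$ are placed at $0,1,\infty$. A stable $2$-partition of $S$ is strictly ordered if one of its parts consists of cyclically consecutive elements for the given cyclic order. $B_n$ is the union of the boundary divisors $D(\sigma)$ with $\sigma$ strictly ordered (equivalently the Zariski closure of the boundary of the closure of the real simplex $\{0<t_1<\dots<t_n<1\}$ in $\overline{\mathcal M}_{0,S}(\mathbb{C})$). A vertex of $B_n$ is a point lying on $n$ distinct irreducible components of $B_n$. *)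

(* Concrete model of \bar M_{0,S} via its standard closed
   embedding into a product of copies of \bar M_{0,4} = P^1 (one factor per
   increasing quadruple of marked points). *)
From mathcomp Require Import all_boot all_algebra.
Set Implicit Arguments. Unset Strict Implicit. Unset Printing Implicit Defensive.
Import GRing.Theory.
Local Open Scope ring_scope.

(* marked points S = 'I_m, m = n+3 : index 0 = "0", index k (1<=k<=n) = s_k,
   index n+1 = "1", index n+2 = "infinity"; the index order is the cyclic order. *)

Definition det2 (K : fieldType) (p q : K * K) : K := p.1 * q.2 - p.2 * q.1.

Definition quad (m : nat) := ('I_m * 'I_m * 'I_m * 'I_m)%type.

Definition incr m (q : quad m) : bool :=
  let '(a, b, c, d) := q in [&& (a < b)%N, (b < c)%N & (c < d)%N].

(* forgetful map to \bar M_{0,{a,b,c,d}} = P^1 on the open part, given in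
   homogeneous coordinates: position of b when a,c,d are put at 0,1,oo. *)
Definition crossratio (K : fieldType) m (t : 'I_m -> K * K) (q : quad m) : K * K :=
  let '(a, b, c, d) := q in
  if incr q then (det2 (t b) (t a) * det2 (t c) (t d),
                  det2 (t c) (t a) * det2 (t b) (t d))
  else (1, 1).

Definition config (K : fieldType) m (t : 'I_m -> K * K) : Prop :=
  forall j k : 'I_m, j != k -> det2 (t j) (t k) != 0.

Definition proportional (K : fieldType) (p r : K * K) : Prop :=
  exists c : K, c != 0 /\ r = (c * p.1, c * p.2).

(* points of the product of P^1's: one nonzero pair per quadruple *)
Definition pt (K : Type) m := quad m -> K * K.

(* representatives of points of the open part M_{0,S} *)
Definition M0 (K : fieldType) m (x : pt K m) : Prop :=
  exists t : 'I_m -> K * K, config t /\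
    forall q, proportional (crossratio t q) (x q).

Inductive pexpr (K V : Type) : Type :=
  | PC of K
  | PX of V
  | PAdd of pexpr K V & pexpr K V
  | PMul of pexpr K V & pexpr K V.
Arguments PC {K V}. Arguments PX {K V}.

Fixpoint peval (K : fieldType) V (v : V -> K) (e : pexpr K V) : K :=
  match e with
  | PC c => c
  | PX i => v i
  | PAdd e1 e2 => peval v e1 + peval v e2
  | PMul e1 e2 => peval v e1 * peval v e2
  end.

Definition coords (K : Type) m (x : pt K m) : quad m * bool -> K :=
  fun qb => if qb.2 then (x qb.1).1 else (x qb.1).2.

(* \bar M_{0,S}(K): Zariski closure of M_{0,S} in the product of P^1's.
   A polynomial vanishing at all representatives of all points of M0 lies in
   the multihomogeneous vanishing ideal, so this is the Zariski closure. *)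
Definition Mbar (K : fieldType) m (x : pt K m) : Prop :=
  (forall q, x q != (0, 0)) /\
  forall F : pexpr K (quad m * bool),
    (forall y : pt K m, M0 y -> peval (coords y) F = 0) ->
    peval (coords x) F = 0.

(* stable 2-partitions {A, ~:A} of S, represented by one part A *)
Definition stable_part m (A : {set 'I_m}) : bool :=
  (1 < #|A|)%N && (1 < #|~: A|)%N.

Definition cyc_interval m (A : {set 'I_m}) : Prop :=
  exists (j : 'I_m) (len : nat), A = [set k : 'I_m | ((k + m - j) %% m < len)%N].

Definition strictly_ordered m (A : {set 'I_m}) : Prop :=
  stable_part A /\ (cyc_interval A \/ cyc_interval (~: A)).

Definition same_partition m (A B : {set 'I_m}) : Prop := A = B \/ A = ~: B.

(* boundary divisor D({A, ~:A}) : every quadruple with two points on each side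
   is mapped to the boundary point of \bar M_{0,4} for that split:
   {a,b}|{c,d} -> 0 = [0:1], {b,c}|{a,d} -> 1 = [1:1], {b,d}|{a,c} -> oo = [1:0]. *)
Definition inD (K : fieldType) m (A : {set 'I_m}) (x : pt K m) : Prop :=
  Mbar x /\
  forall q : quad m, incr q ->
    let '(a, b, c, d) := q in
    let sa := a \in A in let sb := b \in A in
    let sc := c \in A in let sd := d \in A in
    ([&& sa == sb, sc == sd & sa != sc] -> (x q).1 = 0) /\
    ([&& sb == sc, sa == sd & sa != sb] -> (x q).1 = (x q).2) /\
    ([&& sb == sd, sa == sc & sa != sb] -> (x q).2 = 0).

Definition vertex (K : fieldType) n (x : pt K n.+3) : Prop :=
  Mbar x /\
  exists sig : 'I_n -> {set 'I_n.+3},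
    (forall k, strictly_ordered (sig k) /\ inD (sig k) x) /\
    (forall k l, k != l -> ~ same_partition (sig k) (sig l)).

(* the quadruple (0, s_i, 1, oo) for i : 'I_n (i.e. s_{i+1}) *)
Definition qi n (i : 'I_n) : quad n.+3 :=
  (inord 0, inord i.+1, inord n.+1, inord n.+2).

From mathcomp Require Import Rstruct complex.
From Stdlib Require Import Reals.
Definition CC : closedFieldType := (Rdefinitions.R)[i].

From mathcomp Require Import all_boot all_algebra zify.
Set Implicit Arguments. Unset Strict Implicit. Unset Printing Implicit Defensive.

(* Suppose pi_i(x) is neither 0 nor 1 and put s = s_i.  For each of the n
   boundary divisors through x, the part of its partition avoiding s is an
   interval of the linear order obtained by cutting the cycle at s.  Two such
   parts never cross, since four witnesses of a crossing would be sent to two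
   different boundary points of M_{0,4}; so they form a laminar family.  As
   pi_i(x) is neither 0 = {0,s}|{1,oo} nor 1 = {s,1}|{0,oo}, a part containing
   oo contains both of its neighbours 0 and 1.  Deleting oo from every part thus
   keeps the n parts distinct and of size at least 2, and together with
   S - {s, oo} they form a laminar family of n + 1 non-singleton subsets of an
   (n + 1)-element set, which is impossible. *)

Section Laminar.
Variable T : finType.
Implicit Types (A B C U : {set T}) (F G : {set {set T}}).

Definition laminar F : Prop :=
  {in F &, forall A B, [|| A \subset B, B \subset A | [disjoint A & B]]}.

Lemma laminarS F G : G \subset F -> laminar F -> laminar G.
Proof. by move=> /subsetP GF lamF A B /GF AF /GF BF; exact: lamF. Qed.

Lemma laminar_setD1 F u : laminar F -> laminar [set B :\ u | B in F].
Proof.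
move=> lamF _ _ /imsetP[A AF ->] /imsetP[B BF ->].
case/or3P: (lamF A B AF BF) => [AB|BA|dAB].
- by rewrite (setSD _ AB).
- by rewrite (setSD _ BA) orbT.
- by rewrite (disjointW (subsetDl A _) (subsetDl B _) dAB) !orbT.
Qed.

Lemma laminarU1 U F : laminar F -> (forall A, A \in F -> A \subset U) ->
  laminar (U |: F).
Proof.
move=> lamF subU A B; rewrite !inE => /predU1P[->|AF] /predU1P[->|BF].
- by rewrite subxx.
- by rewrite subU ?orbT.
- by rewrite subU.
- exact: lamF.
Qed.

Section MinimalMember.
Variables (F : {set {set T}}) (A : {set T}) (u : T).
Hypotheses (lamF : laminar F) (minA : minset (mem F) A) (uA : u \in A).

Lemma laminar_minset_proper B : B \in F :\ A -> u \in B -> A \proper B.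
Proof.
case/setD1P=> BA BF uB; case/or3P: (lamF (minsetp minA) BF) => [AB|BsA|dAB].
- by rewrite properEneq eq_sym BA.
- by rewrite (minsetinf minA BF BsA) eqxx in BA.
- by rewrite (disjointFr dAB uA) in uB.
Qed.

Lemma laminar_minset_setD1_inj : 1 < #|A| ->
  {in F :\ A &, injective (fun B => B :\ u)}.
Proof.
move=> A2; have AF : A \in F := minsetp minA.
have [v /setD1P[vu vA]] : {v | v \in A :\ u}.
  by apply/sigW/set0Pn; rewrite -card_gt0; move: A2; rewrite (cardsD1 u A) uA.
have u_out B C : B \in F :\ A -> C \in F :\ A -> u \in B -> u \notin C ->
    B :\ u != C :\ u.
  move=> BFA /setD1P[CA CF] uB uC; apply/eqP => eBC.
  have /setD1P[_ vC] : v \in C :\ u.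
    by rewrite -eBC !inE vu (subsetP (proper_sub (laminar_minset_proper BFA uB))).
  case/or3P: (lamF AF CF) => [AC|CsA|dAC].
  - by rewrite (subsetP AC u uA) in uC.
  - by rewrite (minsetinf minA CF CsA) eqxx in CA.
  - by rewrite (disjointFr dAC vA) in vC.
move=> B C BFA CFA eBC.
case: (boolP (u \in B)) => uB; case: (boolP (u \in C)) => uC.
- by rewrite -(setD1K uB) -(setD1K uC) eBC.
- by move: (u_out B C BFA CFA uB uC); rewrite eBC eqxx.
- by move: (u_out C B CFA BFA uC uB); rewrite eBC eqxx.
- apply/setP => w; have /setP/(_ w) := eBC; rewrite !inE.
  by case: (eqVneq w u) => [->|]; rewrite ?(negbTE uB) ?(negbTE uC).
Qed.
End MinimalMember.

(* Induction on [#|U|]: deleting a point of a minimal member [A] removes only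
   [A] from the family. *)
Lemma laminar_card U F : laminar F ->
  (forall A, A \in F -> A \subset U /\ 1 < #|A|) -> #|F| <= #|U|.-1.
Proof.
move: {2}#|U| (leqnn #|U|) => N; elim: N U F => [|N IHN] U F leUN lamF memF;
  case: (set_0Vmem F) => [->|[C CF]]; rewrite ?cards0 //.
  by have [/subset_leq_card CU C2] := memF C CF; lia.
have [A minA _] := @minset_exists _ (mem F) C CF.
have AF : A \in F := minsetp minA.
have [AU A2] := memF A AF.
have [u uA] : {u | u \in A} by apply/sigW/set0Pn; rewrite -card_gt0; lia.
have uU : u \in U := subsetP AU u uA.
have A_u : 0 < #|A :\ u| by move: A2; rewrite (cardsD1 u A) uA.
have sizeF' : #|F :\ A| <= #|U :\ u|.-1.
  rewrite -(card_in_imset (laminar_minset_setD1_inj lamF minA uA A2)); apply: IHN.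
  - by move: leUN; rewrite (cardsD1 u U) uU.
  - exact/laminar_setD1/(laminarS (subsetDl F _)).
  move=> _ /imsetP[B BFA ->]; have [_ BF] := setD1P BFA; have [BU B2] := memF B BF.
  split; first exact: setSD.
  move: B2; rewrite (cardsD1 u B); case: (boolP (u \in B)) => [uB _|//].
  have := proper_card (laminar_minset_proper lamF minA uA BFA uB).
  by rewrite (cardsD1 u B) uB add1n ltnS; exact: leq_trans A2.
rewrite (cardsD1 A F) AF (cardsD1 u U) uU add1n /=.
apply: leq_ltn_trans sizeF' _; rewrite ltn_predL.
exact: leq_trans A_u (subset_leq_card (setSD _ AU)).
Qed.
End Laminar.

Lemma cyc_offsetE m (j k : 'I_m) :
  (k + m - j) %% m = if j <= k then k - j else k + m - j.
Proof.
have km := ltn_ord k; case: leqP => jk.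
  by rewrite -addnBAC // modnDr modn_small //; lia.
by rewrite modn_small //; lia.
Qed.

Lemma cyc_interval_setC m (C : {set 'I_m}) : cyc_interval C -> cyc_interval (~: C).
Proof.
case=> j [len ->]; have jm := ltn_ord j.
case: (leqP m len) => [mlen|lenm].
  exists j, 0; apply/setP => k; rewrite !inE cyc_offsetE; have := ltn_ord k.
  by case: ifP; lia.
have j'm : (if j + len < m then j + len else j + len - m) < m by case: ifP; lia.
exists (Ordinal j'm), (m - len); apply/setP => k; rewrite !inE !cyc_offsetE /=.
have := ltn_ord k.
by case: ifP; case: ifP; case: ifP => *; apply/idP/idP; lia.
Qed.

Section CyclicPosition.
Variables (m : nat) (s : 'I_m).

(* Position of [w] in the cyclic order starting right after [s]; [s] itself
   comes last, at position [m.-1]. *)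
Definition cpos (w : 'I_m) : nat := if s < w then w - s.+1 else w + m - s.+1.

Lemma cpos_inj : injective cpos.
Proof.
move=> w w'; rewrite /cpos => e; apply: ord_inj; move: e.
by have := ltn_ord w; have := ltn_ord w'; have := ltn_ord s; case: ifP; case: ifP; lia.
Qed.

Lemma cyc_interval_cpos C : cyc_interval C -> s \notin C ->
  exists a b, forall w, (w \in C) = (a <= cpos w < b).
Proof.
case=> j [len ->]; rewrite inE cyc_offsetE -leqNgt => sC.
have sm := ltn_ord s; have jm := ltn_ord j.
pose d := if j <= s then s - j else s + m - j.
exists (m.-1 - d), (m.-1 - d + len) => w.
rewrite inE cyc_offsetE /cpos /d; have := ltn_ord w; move: sC.
by case: (leqP j s); case: (leqP j w); case: (ltnP s w) => *; apply/idP/idP; lia.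
Qed.

Lemma cpos_rotation p1 p2 p3 : cpos p1 < cpos p2 -> cpos p2 < cpos p3 -> p3 != s ->
  [\/ incr (p1, p2, p3, s), incr (p2, p3, s, p1),
      incr (p3, s, p1, p2) | incr (s, p1, p2, p3)].
Proof.
rewrite /cpos /incr => lt12 lt23 /eqP p3s.
have {}p3s : p3 <> s :> nat by move=> e; apply/p3s/ord_inj.
have := ltn_ord p1; have := ltn_ord p2; have := ltn_ord p3.
move: lt12 lt23; case: (ltnP s p1); case: (ltnP s p2); case: (ltnP s p3) => *;
  first [ lia | by apply: Or41; apply/and3P; split=> //; lia
        | by apply: Or42; apply/and3P; split=> //; lia
        | by apply: Or43; apply/and3P; split=> //; lia
        | by apply: Or44; apply/and3P; split=> //; lia ].
Qed.
End CyclicPosition.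

Definition separates m (A : {set 'I_m}) (a b c d : 'I_m) : bool :=
  [&& (a \in A) == (b \in A), (c \in A) == (d \in A) & (a \in A) != (c \in A)].

Section BoundaryDivisors.
Variables (K : fieldType) (m : nat) (x : pt K m).
Implicit Types (A B : {set 'I_m}) (a b c d : 'I_m).

Lemma inD_setC A : inD A x -> inD (~: A) x.
Proof.
case=> Mx DA; split=> // -[[[a b] c] d] /DA /=; rewrite !inE.
by case: (a \in A); case: (b \in A); case: (c \in A); case: (d \in A).
Qed.

Lemma inD_sep_ab_cd A a b c d : inD A x -> incr (a, b, c, d) ->
  separates A a b c d -> (x (a, b, c, d)).1 = 0%R.
Proof. by case=> _ /(_ (a, b, c, d)) DA /DA[+ _]; exact. Qed.

Lemma inD_sep_bc_da A a b c d : inD A x -> incr (a, b, c, d) ->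
  separates A b c d a -> (x (a, b, c, d)).1 = (x (a, b, c, d)).2.
Proof.
case=> _ /(_ (a, b, c, d)) DA /DA[_ [+ _]] sep; apply; move: sep.
by rewrite /separates; case: (a \in A); case: (b \in A); case: (c \in A); case: (d \in A).
Qed.

Lemma inD_cross A B a b c d : inD A x -> inD B x -> incr (a, b, c, d) ->
  separates A a b c d -> separates B b c d a -> False.
Proof.
move=> DA DB q sA sB; have [[nz _] _] := DA.
have := nz (a, b, c, d).
by rewrite [x _]surjective_pairing -(inD_sep_bc_da DB q sB) (inD_sep_ab_cd DA q sA) eqxx.
Qed.

Lemma inD_noncrossing (s : 'I_m) A B p1 p2 p3 : inD A x -> inD B x ->
  cpos s p1 < cpos s p2 -> cpos s p2 < cpos s p3 ->
  p1 \in A -> p2 \in A -> p3 \notin A -> s \notin A ->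
  p1 \notin B -> p2 \in B -> p3 \in B -> s \notin B -> False.
Proof.
move=> DA DB lt12 lt23 p1A p2A /negbTE p3A /negbTE sA /negbTE p1B p2B p3B /negbTE sB.
have p3s : p3 != s by apply: contraTneq p3B => ->; rewrite sB.
case: (cpos_rotation lt12 lt23 p3s) => q;
  [ apply: (inD_cross DA DB q) | apply: (inD_cross DB DA q)
  | apply: (inD_cross DA DB q) | apply: (inD_cross DB DA q) ];
  by rewrite /separates ?p1A ?p2A ?p3A ?sA ?p1B ?p2B ?p3B ?sB.
Qed.

Lemma inD_nested_or_disjoint (s : 'I_m) A B : inD A x -> inD B x ->
  cyc_interval A -> cyc_interval B -> s \notin A -> s \notin B ->
  [|| A \subset B, B \subset A | [disjoint A & B]].
Proof.
move=> DA DB cA cB sA sB.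
have [a1 [b1 memA]] := cyc_interval_cpos cA sA.
have [a2 [b2 memB]] := cyc_interval_cpos cB sB.
have [AB|/subsetPn[w wA wB]] := boolP (A \subset B); first exact/or3P/Or31.
have [BA|/subsetPn[z zB zA]] := boolP (B \subset A); first exact/or3P/Or32.
have [dAB|] := boolP [disjoint A & B]; first exact/or3P/Or33.
rewrite -setI_eq0 => /set0Pn[y /setIP[yA yB]]; exfalso.
have /orP[/andP[wy yz]|/andP[zy yw]] :
    (cpos s w < cpos s y < cpos s z) || (cpos s z < cpos s y < cpos s w).
  move: wA wB zA zB yA yB; rewrite !memA !memB.
  move: (cpos s w) (cpos s y) (cpos s z) => pw py pz; lia.
- exact: (inD_noncrossing DA DB wy yz).
- exact: (inD_noncrossing DB DA zy yw).
Qed.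
End BoundaryDivisors.

Section Vertex.
Variables (K : fieldType) (n : nat) (x : pt K n.+3) (i : 'I_n).
Variable sig : 'I_n -> {set 'I_n.+3}.
Hypothesis sig_strictly_ordered : forall k, strictly_ordered (sig k).
Hypothesis sig_inD : forall k, inD (sig k) x.
Hypothesis sig_distinct : forall k l, k != l -> ~ same_partition (sig k) (sig l).
Hypothesis x_qi_neq0 : (x (qi i)).1 != 0%R.
Hypothesis x_qi_neq1 : (x (qi i)).1 != (x (qi i)).2.

Let s : 'I_n.+3 := inord i.+1.
Let p0 : 'I_n.+3 := inord 0.
Let p1 : 'I_n.+3 := inord n.+1.
Let pinf : 'I_n.+3 := inord n.+2.

Definition away k : {set 'I_n.+3} := if s \in sig k then ~: sig k else sig k.

Lemma inD_away k : inD (away k) x.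
Proof. by rewrite /away; case: ifP => _; [apply: inD_setC|]; exact: sig_inD. Qed.

Lemma s_notin_away k : s \notin away k.
Proof. by rewrite /away; case: ifP => sk; rewrite ?inE sk. Qed.

Lemma card_away_gt1 k : 1 < #|away k| /\ 1 < #|~: away k|.
Proof.
have [/andP[A2 AC2] _] := sig_strictly_ordered k.
by rewrite /away; case: ifP; rewrite ?setCK.
Qed.

Lemma cyc_interval_away k : cyc_interval (away k).
Proof.
have [_ [cA|cAC]] := sig_strictly_ordered k; rewrite /away; case: ifP => _ //.
- exact: cyc_interval_setC.
- by rewrite -[sig k]setCK; exact: cyc_interval_setC.
Qed.

Lemma away_inj : injective away.
Proof.
move=> k l; rewrite /away => eA; apply/eqP/negPn/negP => kl.
apply: (sig_distinct kl); rewrite /same_partition.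
move: eA; case: ifP; case: ifP => _ _ eA.
- by left; exact: setC_inj.
- by right; rewrite -eA setCK.
- by right.
- by left.
Qed.

Lemma laminar_away : laminar [set away k | k : 'I_n].
Proof.
move=> _ _ /imsetP[k _ ->] /imsetP[l _ ->].
apply: (inD_nested_or_disjoint (s := s)); 
  by [apply: inD_away | apply: cyc_interval_away | apply: s_notin_away].
Qed.

Lemma marked_val :
  [/\ s = i.+1 :> nat, p0 = 0 :> nat, p1 = n.+1 :> nat & pinf = n.+2 :> nat].
Proof. by rewrite /s /p0 /p1 /pinf !inordK //; have := ltn_ord i; lia. Qed.

Lemma marked_neq : [/\ p0 != s, p0 != p1, p0 != pinf
                    & [/\ s != p1, s != pinf & p1 != pinf]].
Proof.
have [sE p0E p1E pinfE] := marked_val; have := ltn_ord i.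
by rewrite -!val_eqE /= sE p0E p1E pinfE => lt_in; split; [| | |split]; apply/eqP; lia.
Qed.

Lemma cpos_marked :
  [/\ cpos s p1 = (n - i).-1, cpos s pinf = n - i & cpos s p0 = (n - i).+1].
Proof.
have [sE p0E p1E pinfE] := marked_val; have := ltn_ord i.
rewrite /cpos sE p0E p1E pinfE => lt_in.
by split; [rewrite ifT | rewrite ifT | rewrite /=]; lia.
Qed.

Lemma pinf_in_away k : (pinf \in away k) = (p0 \in away k) && (p1 \in away k).
Proof.
set A := away k; have DA : inD A x := inD_away k.
have sA : s \notin A := s_notin_away k.
have q : incr (p0, s, p1, pinf).
  have [sE p0E p1E pinfE] := marked_val; have := ltn_ord i.
  by rewrite /incr /= sE p0E p1E pinfE => lt_in; apply/and3P; split; lia.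
have qiE : qi i = (p0, s, p1, pinf) by [].
(* [x (qi i)] is neither [0] nor [1]: [A] splits neither {0, s} | {1, oo}
   nor {s, 1} | {0, oo}. *)
have rule0 : p1 \in A -> pinf \in A -> p0 \in A.
  move=> p1A pinfA; apply/negPn/negP => p0A; move/eqP: x_qi_neq0; apply; rewrite qiE.
  by apply: (inD_sep_ab_cd DA q); rewrite /separates (negbTE sA) (negbTE p0A) p1A pinfA.
have rule1 : pinf \in A -> p0 \in A -> p1 \in A.
  move=> pinfA p0A; apply/negPn/negP => p1A; move/eqP: x_qi_neq1; apply; rewrite qiE.
  by apply: (inD_sep_bc_da DA q); rewrite /separates (negbTE sA) (negbTE p1A) p0A pinfA.
have [a [b memA]] := cyc_interval_cpos (cyc_interval_away k) sA.
have [e1 einf e0] := cpos_marked.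
apply/idP/andP => [pinfA|[p0A p1A]]; last by move: p0A p1A; rewrite !memA e0 e1 einf; lia.
have [w /setD1P[wpinf wA]] : {w | w \in A :\ pinf}.
  apply/sigW/set0Pn; rewrite -card_gt0; have [A2 _] := card_away_gt1 k.
  by move: A2; rewrite (cardsD1 pinf A) pinfA.
have wt : cpos s w != n - i by rewrite -einf; apply: contra wpinf => /eqP/cpos_inj ->.
have /orP[p1A|p0A] : (p1 \in A) || (p0 \in A).
  move: wA pinfA; rewrite !memA e0 e1 einf; move: (cpos s w) wt => pw; lia.
- by split; [apply: rule0|].
- by split; [|apply: rule1].
Qed.

Lemma vertex_contradiction : False.
Proof.
have [p0s p0p1 p0pinf [sp1 spinf p1pinf]] := marked_neq.
pose W := ~: [set s; pinf].
pose G := [set B :\ pinf | B in [set away k | k : 'I_n]].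
have inW w : (w \in W) = (w != s) && (w != pinf) by rewrite !inE negb_or.
have subW B : B \in G -> B \subset W.
  case/imsetP=> _ /imsetP[k _ ->] ->; apply/subsetP => w /setD1P[wpinf wA].
  by rewrite inW wpinf andbT; apply: contraTneq wA => ->; exact: s_notin_away.
have pinfE k : (pinf \in away k) = (p0 \in away k :\ pinf) && (p1 \in away k :\ pinf).
  by rewrite pinf_in_away !inE p0pinf p1pinf.
have injD1 : {in [set away k | k : 'I_n] &, injective (fun B => B :\ pinf)}.
  move=> _ _ /imsetP[k _ ->] /imsetP[l _ ->] e; apply/setP => w.
  case: (eqVneq w pinf) => [->|wpinf]; first by rewrite !pinfE e.
  by have /setP/(_ w) := e; rewrite !inE wpinf.
have WG : W \notin G.
  apply/imsetP => -[_ /imsetP[k _ ->] eW].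
  have inA w : w != s -> w != pinf -> w \in away k.
    by move=> ws wpinf; have := inW w; rewrite ws wpinf eW => /setD1P[].
  have pinfA : pinf \in away k by rewrite pinf_in_away !inA // eq_sym.
  have [_] := card_away_gt1 k; apply/negP; rewrite -leqNgt -(cards1 s).
  apply/subset_leq_card/subsetP => w; rewrite !inE; apply: contraNT => ws.
  by case: (eqVneq w pinf) => [->//|wpinf]; exact: inA.
have cardW : #|W| = n.+1 by rewrite cardsCs setCK cards2 spinf card_ord.
have lamF : laminar (W |: G).
  exact: laminarU1 (laminar_setD1 (u := pinf) laminar_away) subW.
have memF A : A \in W |: G -> A \subset W /\ 1 < #|A|.
  rewrite !inE => /predU1P[->|AG].
    by rewrite cardW; split=> //; have := ltn_ord i; lia.
  split; first exact: subW.
  case/imsetP: AG => _ /imsetP[k _ ->] ->.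
  case: (boolP (pinf \in away k)) => [|pinfA].
    by rewrite pinfE => /andP[p0A p1A]; apply/card_gt1P; exists p0, p1.
  have [A2 _] := card_away_gt1 k.
  by move: A2; rewrite (cardsD1 pinf (away k)) (negbTE pinfA).
have := laminar_card lamF memF.
rewrite cardsU1 WG card_in_imset // card_imset ?card_ord; last exact: away_inj.
by rewrite cardW /= add1n ltnn.
Qed.
End Vertex.

Local Open Scope ring_scope.

Theorem proposition2p7 (n : nat) (x : pt CC n.+3) :
  vertex x ->
  forall i : 'I_n, (x (qi i)).1 = 0 \/ (x (qi i)).1 = (x (qi i)).2.
Proof.
move=> [_ [sig [sigP sig_distinct]]] i.
have [x0|x_neq0] := eqVneq (x (qi i)).1 0; first by left.
have [x1|x_neq1] := eqVneq (x (qi i)).1 (x (qi i)).2; first by right.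
by case: (vertex_contradiction (fun k => (sigP k).1) (fun k => (sigP k).2)
  sig_distinct x_neq0 x_neq1).
Qed.
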